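(* Let $\Sigma$ be a finite set of dependencies and $\mathcal{D}$ a database. (1) For every fact $\alpha$, $\langle\Sigma,\mathcal{D}\rangle$ AR-entails $\alpha$ if and only if $\langle\Sigma,\mathcal{D}\rangle$ IAR-entails $\alpha$. (2) If moreover every dependency of $\Sigma$ is linear, then for every domain-independent first-order sentence $\phi$ (in particular every safe BUCQ), $\langle\Sigma,\mathcal{D}\rangle$ AR-entails $\phi$ if and only if $\langle\Sigma,\mathcal{D}\rangle$ IAR-entails $\phi$.
   Context: A signature is a set of predicate symbols with arities, always containing a special 0-ary predicate $\bot$. A term is a constant or a variable; a (predicate) atom is $p(t_1,\dots,t_n)$; an inequality is $t\neq t'$. A database is a finite set of ground atoms (facts) not containing $\bot$. A conjunction with inequalities is a conjunction of at least one predicate atom or inequality. A CQ is $\exists\vec y\,\gamma$ with $\gamma$ a conjunction with inequalities; it is safe if every variable occurs in a predicate atom; a UCQ is a finite disjunction of CQs; a safe BUCQ is a UCQ without free variables whose CQs are safe. A dependency is a first-order sentence $\forall\vec x\,(\gamma\rightarrow Q)$ where $\gamma$ (the body) is a conjunction with inequalities whose variables are in $\vec x$, each occurring in some predicate atom of $\gamma$, and $Q$ (the head) is a UCQ whose free variables are among $\vec x$ and in which every existentially quantified variable of each disjunct occurs in a predicate atom of that disjunct. A dependency is linear if its body contains exactly one predicate atom. $\mathcal{D}$ is consistent with $\Sigma$ if $\mathcal{D}$ satisfies every dependency of $\Sigma$. A repair of $\langle\Sigma,\mathcal{D}\rangle$ is an inclusion-maximal subset of $\mathcal{D}$ consistent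 with $\Sigma$. $\langle\Sigma,\mathcal{D}\rangle$ AR-entails $\phi$ if $\mathcal{D}'\models\phi$ for every repair $\mathcal{D}'$; it IAR-entails $\phi$ if the intersection of all repairs satisfies $\phi$. *)

From Stdlib Require Import List Arith.
Import ListNotations.

Set Implicit Arguments.

Section FO.

(* C : constants; P : predicate symbols with arity ar; bot : the special
   0-ary predicate symbol. Variables are natural numbers. *)
Variables (C P : Type) (ar : P -> nat) (bot : P).

Inductive term : Type := TVar (x : nat) | TCst (c : C).

Inductive formula : Type :=
| FTrue : formula
| FFalse : formula
| FAtom : P -> list term -> formula
| FEq : term -> term -> formula
| FNot : formula -> formula
| FAnd : formula -> formula -> formula
| FOr : formula -> formula -> formula
| FImp : formula -> formula -> formula
| FEx : nat -> formula -> formula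
| FAll : nat -> formula -> formula.

Record fact : Type := Fact { fpred : P; fargs : list C }.

Definition wf_fact (f : fact) : Prop := length (fargs f) = ar (fpred f).

Definition factset := fact -> Prop.

Definition is_database (D : factset) : Prop :=
  (exists l : list fact, forall f, D f <-> In f l) /\
  (forall f, D f -> wf_fact f /\ fpred f <> bot).

Definition subset (A B : factset) : Prop := forall f, A f -> B f.

Definition adom (I : factset) (c : C) : Prop := exists f, I f /\ In c (fargs f).

(* assignments: partial (None = unassigned) *)
Definition env := nat -> option C.
Definition env0 : env := fun _ => None.
Definition upd (nu : env) (x : nat) (c : C) : env :=
  fun y => if Nat.eqb y x then Some c else nu y.

Definition eval (nu : env) (t : term) : option C :=
  match t with TVar x => nu x | TCst c => Some c end.

Fixpoint eval_list (nu : env) (ts : list term) : option (list C) :=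
  match ts with
  | [] => Some []
  | t :: ts' =>
      match eval nu t, eval_list nu ts' with
      | Some c, Some cs => Some (c :: cs)
      | _, _ => None
      end
  end.

(* Satisfaction of a formula in the structure with domain Dom whose
   relations are given by the fact set I (constants interpreted by
   themselves). *)
Fixpoint sat (Dom : C -> Prop) (I : factset) (nu : env) (phi : formula) : Prop :=
  match phi with
  | FTrue => True
  | FFalse => False
  | FAtom p ts =>
      match eval_list nu ts with
      | Some cs => I (Fact p cs)
      | None => False
      end
  | FEq t t' =>
      match eval nu t, eval nu t' with
      | Some c, Some c' => c = c'
      | _, _ => False
      end
  | FNot a => ~ sat Dom I nu a
  | FAnd a b => sat Dom I nu a /\ sat Dom I nu b
  | FOr a b => sat Dom I nu a \/ sat Dom I nu b
  | FImp a b => sat Dom I nu a -> sat Dom I nu b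
  | FEx x a => exists c, Dom c /\ sat Dom I (upd nu x c) a
  | FAll x a => forall c, Dom c -> sat Dom I (upd nu x c) a
  end.

(* I |= phi : the database as a first-order structure over the set of
   all constants *)
Definition models (I : factset) (phi : formula) : Prop :=
  sat (fun _ => True) I env0 phi.

Definition term_var (t : term) (x : nat) : Prop :=
  match t with TVar y => y = x | TCst _ => False end.

Fixpoint free (x : nat) (phi : formula) : Prop :=
  match phi with
  | FTrue | FFalse => False
  | FAtom _ ts => exists t, In t ts /\ term_var t x
  | FEq t t' => term_var t x \/ term_var t' x
  | FNot a => free x a
  | FAnd a b | FOr a b | FImp a b => free x a \/ free x b
  | FEx y a | FAll y a => y <> x /\ free x a
  end.

Definition sentence (phi : formula) : Prop := forall x, ~ free x phi.

Definition term_cst (t : term) (c : C) : Prop :=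
  match t with TCst d => d = c | TVar _ => False end.

Fixpoint const_of (phi : formula) (c : C) : Prop :=
  match phi with
  | FTrue | FFalse => False
  | FAtom _ ts => exists t, In t ts /\ term_cst t c
  | FEq t t' => term_cst t c \/ term_cst t' c
  | FNot a | FEx _ a | FAll _ a => const_of a c
  | FAnd a b | FOr a b | FImp a b => const_of a c \/ const_of b c
  end.

Fixpoint wf_formula (phi : formula) : Prop :=
  match phi with
  | FTrue | FFalse | FEq _ _ => True
  | FAtom p ts => length ts = ar p
  | FNot a | FEx _ a | FAll _ a => wf_formula a
  | FAnd a b | FOr a b | FImp a b => wf_formula a /\ wf_formula b
  end.

Definition domain_independent (phi : formula) : Prop :=
  forall (I : factset), is_database I ->
  forall Dom1 Dom2 : C -> Prop,
    (forall c, adom I c \/ const_of phi c -> Dom1 c) ->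
    (forall c, adom I c \/ const_of phi c -> Dom2 c) ->
    (sat Dom1 I env0 phi <-> sat Dom2 I env0 phi).

Inductive lit : Type :=
| LAtom : P -> list term -> lit
| LNeq : term -> term -> lit.

Definition lit_formula (l : lit) : formula :=
  match l with
  | LAtom p ts => FAtom p ts
  | LNeq t t' => FNot (FEq t t')
  end.

Fixpoint conj_formula (ls : list lit) : formula :=
  match ls with
  | [] => FTrue
  | [l] => lit_formula l
  | l :: ls' => FAnd (lit_formula l) (conj_formula ls')
  end.

Definition lit_var (l : lit) (x : nat) : Prop :=
  match l with
  | LAtom _ ts => exists t, In t ts /\ term_var t x
  | LNeq t t' => term_var t x \/ term_var t' x
  end.

Definition is_pred_atom (l : lit) : Prop :=
  match l with LAtom _ _ => True | LNeq _ _ => False end.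

Definition wf_lit (l : lit) : Prop :=
  match l with LAtom p ts => length ts = ar p | LNeq _ _ => True end.

Definition in_pred_atom (ls : list lit) (x : nat) : Prop :=
  exists l, In l ls /\ is_pred_atom l /\ lit_var l x.

Definition conj_var (ls : list lit) (x : nat) : Prop :=
  exists l, In l ls /\ lit_var l x.

Definition is_conj (ls : list lit) : Prop :=
  ls <> [] /\ forall l, In l ls -> wf_lit l.

Record cq : Type := CQ { cq_ex : list nat; cq_body : list lit }.

Fixpoint exists_list (xs : list nat) (phi : formula) : formula :=
  match xs with [] => phi | x :: xs' => FEx x (exists_list xs' phi) end.

Fixpoint forall_list (xs : list nat) (phi : formula) : formula :=
  match xs with [] => phi | x :: xs' => FAll x (forall_list xs' phi) end.

Definition cq_formula (q : cq) : formula := exists_list (cq_ex q) (conj_formula (cq_body q)).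

Definition ucq := list cq.

Fixpoint ucq_formula (Q : ucq) : formula :=
  match Q with
  | [] => FFalse
  | [q] => cq_formula q
  | q :: Q' => FOr (cq_formula q) (ucq_formula Q')
  end.

Definition cq_free (q : cq) (x : nat) : Prop :=
  conj_var (cq_body q) x /\ ~ In x (cq_ex q).

Definition safe_BUCQ (Q : ucq) : Prop :=
  Q <> [] /\
  forall q, In q Q ->
    is_conj (cq_body q) /\
    (forall x, conj_var (cq_body q) x -> In x (cq_ex q)) /\
    (forall x, conj_var (cq_body q) x -> in_pred_atom (cq_body q) x).

Record dependency : Type :=
  Dep { dep_vars : list nat; dep_body : list lit; dep_head : ucq }.

Definition dep_formula (d : dependency) : formula :=
  forall_list (dep_vars d) (FImp (conj_formula (dep_body d)) (ucq_formula (dep_head d))).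

Definition is_dependency (d : dependency) : Prop :=
  is_conj (dep_body d) /\
  (forall x, conj_var (dep_body d) x -> In x (dep_vars d)) /\
  (forall x, conj_var (dep_body d) x -> in_pred_atom (dep_body d) x) /\
  dep_head d <> [] /\
  (forall q, In q (dep_head d) ->
     is_conj (cq_body q) /\
     (forall x, cq_free q x -> In x (dep_vars d)) /\
     (forall x, In x (cq_ex q) -> in_pred_atom (cq_body q) x)).

Definition linear (d : dependency) : Prop :=
  exists p ts, forall l, (In l (dep_body d) /\ is_pred_atom l) <-> l = LAtom p ts.

Definition consistent (Sigma : list dependency) (D : factset) : Prop :=
  forall d, In d Sigma -> models D (dep_formula d).

Definition repair (Sigma : list dependency) (D R : factset) : Prop :=
  subset R D /\ consistent Sigma R /\
  forall R', subset R R' -> subset R' D -> consistent Sigma R' -> subset R' R.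

Definition AR_entails (Sigma : list dependency) (D : factset) (phi : formula) : Prop :=
  forall R, repair Sigma D R -> models R phi.

Definition repairs_inter (Sigma : list dependency) (D : factset) : factset :=
  fun f => forall R, repair Sigma D R -> R f.

Definition IAR_entails (Sigma : list dependency) (D : factset) (phi : formula) : Prop :=
  models (repairs_inter Sigma D) phi.

Definition fact_formula (a : fact) : formula := FAtom (fpred a) (map TCst (fargs a)).

End FO.

(* Part (1) holds for arbitrary dependencies: a fact is true in every repair
   exactly when it belongs to their intersection.

   For part (2), a linear dependency has a single atom in its body, so any
   match of its body in a union of consistent fact sets already lies in one
   of them; since UCQ heads are monotone, the head is then satisfied in that
   member and hence in the union.  So the union of all consistent subsets of
   D is consistent: it is the unique repair and coincides with the
   intersection of all repairs.  AR and IAR entailment therefore agree on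
   every sentence. *)
From Stdlib Require Import List.

Section Repairs.
Variables C P : Type.

Notation full_domain := (fun _ : C => True).

Lemma sat_ext (Dom : C -> Prop) {I J : factset C P} :
  (forall f, I f <-> J f) ->
  forall phi nu, sat Dom I nu phi <-> sat Dom J nu phi.
Proof.
  intros HIJ phi; induction phi; intros nu; simpl; try tauto.
  - destruct (eval_list nu l); [apply HIJ | tauto].
  - rewrite IHphi; tauto.
  - rewrite IHphi1, IHphi2; tauto.
  - rewrite IHphi1, IHphi2; tauto.
  - rewrite IHphi1, IHphi2; tauto.
  - split; intros [c [Hc Hs]]; exists c; split; auto; apply IHphi; auto.
  - split; intros Hs c Hc; apply IHphi; auto.
Qed.

Lemma sat_conj_formula (Dom : C -> Prop) (I : factset C P) nu ls :
  sat Dom I nu (conj_formula ls) <->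
  forall l, In l ls -> sat Dom I nu (lit_formula l).
Proof.
  induction ls as [|a [|b ls] IH].
  - simpl; tauto.
  - simpl; split; [intros H l [<-|[]]; exact H | intros H; apply H; auto].
  - change (sat Dom I nu (lit_formula a) /\ sat Dom I nu (conj_formula (b :: ls))
      <-> (forall l, In l (a :: b :: ls) -> sat Dom I nu (lit_formula l))).
    rewrite IH; split.
    + intros [Ha Hls] l [<-|Hl]; auto.
    + intros H; split; [apply H; left | intros l Hl; apply H; right]; auto.
Qed.

Lemma sat_lit_mono {Dom : C -> Prop} {I J : factset C P} l nu :
  subset I J -> sat Dom I nu (lit_formula l) -> sat Dom J nu (lit_formula l).
Proof.
  intros HIJ; destruct l as [p ts|t t']; simpl; auto.
  destruct (eval_list nu ts); auto.
Qed.

Lemma sat_cq_mono {Dom : C -> Prop} {I J : factset C P} (q : cq C P) nu :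
  subset I J -> sat Dom I nu (cq_formula q) -> sat Dom J nu (cq_formula q).
Proof.
  intros HIJ; unfold cq_formula; revert nu.
  induction (cq_ex q) as [|x xs IH]; simpl; intros nu.
  - rewrite !sat_conj_formula; intros H l Hl; apply (sat_lit_mono l nu HIJ); auto.
  - intros [c [Hc H]]; exists c; auto.
Qed.

Lemma sat_ucq_mono {Dom : C -> Prop} {I J : factset C P} (Q : ucq C P) nu :
  subset I J -> sat Dom I nu (ucq_formula Q) -> sat Dom J nu (ucq_formula Q).
Proof.
  intros HIJ; induction Q as [|q [|q' Q] IH]; simpl; auto.
  - apply sat_cq_mono; auto.
  - intros [H|H]; [left; apply (sat_cq_mono _ _ HIJ) | right; apply IH]; auto.
Qed.

Definition factset_union (F : factset C P -> Prop) : factset C P :=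
  fun f => exists R, F R /\ R f.

Lemma subset_factset_union (F : factset C P -> Prop) {R} :
  F R -> subset R (factset_union F).
Proof. intros FR f Rf; exists R; auto. Qed.

Lemma sat_linear_body_union (F : factset C P -> Prop) {d : dependency C P} nu :
  linear d ->
  sat full_domain (factset_union F) nu (conj_formula (dep_body d)) ->
  exists R, F R /\ sat full_domain R nu (conj_formula (dep_body d)).
Proof.
  intros [p [ts Hatom]] Hbody.
  rewrite sat_conj_formula in Hbody.
  assert (Hin : In (LAtom p ts) (dep_body d)) by (apply Hatom; reflexivity).
  pose proof (Hbody _ Hin) as Hmatch; simpl in Hmatch.
  destruct (eval_list nu ts) as [cs|] eqn:Hcs; [|contradiction].
  destruct Hmatch as [R [FR Rf]].
  exists R; split; auto.
  rewrite sat_conj_formula; intros l Hl.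
  destruct l as [p' ts'|t t'].
  - assert (Heq : LAtom p' ts' = LAtom p ts) by (apply Hatom; split; simpl; auto).
    injection Heq as -> ->; simpl; rewrite Hcs; exact Rf.
  - exact (Hbody _ Hl).
Qed.

Lemma models_linear_dep_union (F : factset C P -> Prop) (d : dependency C P) :
  linear d ->
  (forall R, F R -> models R (dep_formula d)) ->
  models (factset_union F) (dep_formula d).
Proof.
  intros Hlin; unfold models, dep_formula; generalize (env0 C).
  induction (dep_vars d) as [|x xs IH]; simpl; intros nu HF.
  - intros Hbody.
    destruct (sat_linear_body_union F nu Hlin Hbody) as [R [FR HbodyR]].
    apply (sat_ucq_mono _ _ (subset_factset_union F FR)), (HF R FR), HbodyR.
  - intros c _; apply IH; intros R FR; apply (HF R FR c I).
Qed.

Section LinearDependencies.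
Variables (Sigma : list (dependency C P)) (D : factset C P).
Hypothesis Sigma_linear : forall d, In d Sigma -> linear d.

Definition consistent_subset (R : factset C P) : Prop :=
  subset R D /\ consistent Sigma R.

Lemma repair_union_consistent_subset :
  repair Sigma D (factset_union consistent_subset).
Proof.
  split; [|split].
  - intros f [R [[RD _] Rf]]; auto.
  - intros d Hd; apply models_linear_dep_union; auto.
    intros R [_ Rc]; auto.
  - intros R' _ R'D R'c; apply subset_factset_union; split; auto.
Qed.

Lemma repair_unique {R} :
  repair Sigma D R -> forall f, R f <-> factset_union consistent_subset f.
Proof.
  intros [RD [Rc Rmax]] f; split.
  - apply subset_factset_union; split; auto.
  - apply Rmax; [apply subset_factset_union; split; auto | apply repair_union_consistent_subset..].
Qed.

Lemma repairs_inter_union_consistent_subset f :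
  repairs_inter Sigma D f <-> factset_union consistent_subset f.
Proof.
  split.
  - intros H; apply H, repair_union_consistent_subset.
  - intros H R HR; apply (repair_unique HR); auto.
Qed.

Lemma linear_AR_iff_IAR phi :
  AR_entails Sigma D phi <-> IAR_entails Sigma D phi.
Proof.
  unfold AR_entails, IAR_entails, models.
  rewrite (sat_ext _ repairs_inter_union_consistent_subset).
  split.
  - intros H; apply H, repair_union_consistent_subset.
  - intros H R HR; apply (sat_ext _ (repair_unique HR)); auto.
Qed.

End LinearDependencies.

Lemma eval_list_map_TCst (nu : env C) (cs : list C) :
  eval_list nu (map (@TCst C) cs) = Some cs.
Proof. induction cs as [|c cs IH]; simpl; [|rewrite IH]; reflexivity. Qed.

Lemma AR_iff_IAR_fact (Sigma : list (dependency C P)) (D : factset C P) (alpha : fact C P) :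
  AR_entails Sigma D (fact_formula alpha) <-> IAR_entails Sigma D (fact_formula alpha).
Proof.
  unfold AR_entails, IAR_entails, models, fact_formula, repairs_inter; simpl.
  rewrite !eval_list_map_TCst; destruct alpha; simpl; tauto.
Qed.

End Repairs.

Theorem proposition1 (C P : Type) (ar : P -> nat) (bot : P) (Hbot : ar bot = 0)
  (Sigma : list (dependency C P)) (D : factset C P) :
  (forall d, In d Sigma -> is_dependency ar d) ->
  is_database ar bot D ->
  (* (1) *)
  (forall alpha : fact C P, wf_fact ar alpha ->
     (AR_entails Sigma D (fact_formula alpha) <->
      IAR_entails Sigma D (fact_formula alpha))) /\
  (* (2) *)
  ((forall d, In d Sigma -> linear d) ->
     (forall phi : formula C P,
        wf_formula ar phi -> sentence phi -> domain_independent ar bot phi ->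
        (AR_entails Sigma D phi <-> IAR_entails Sigma D phi)) /\
     (* in particular, safe BUCQs *)
     (forall Q : ucq C P, safe_BUCQ ar Q ->
        (AR_entails Sigma D (ucq_formula Q) <->
         IAR_entails Sigma D (ucq_formula Q)))).
Proof.
  intros _ _; split.
  - intros alpha _; apply AR_iff_IAR_fact.
  - intros Hlin; split.
    + intros phi _ _ _; apply linear_AR_iff_IAR; auto.
    + intros Q _; apply linear_AR_iff_IAR; auto.
Qed.
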